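(* Let $T$ be a metric tree with six leaves (unbounded legs), all of whose vertices have genus $0$. Then, up to isomorphism, there is exactly one metric graph $\Gamma$ of genus two with six legs together with a tropical hyperelliptic cover $\pi\colon\Gamma\to T$ (a harmonic map of degree two) that is branched at all six legs of $T$.
   Context: A metric graph is a connected graph with vertices $V$, edges $E$ and unbounded legs, with a genus function $g\colon V\to\mathbb{Z}_{\ge0}$ and positive lengths on edges (legs have infinite length); its genus is $b_1+\sum_v g(v)$, $b_1=|E|-|V|+1$. A morphism of metric graphs $\pi\colon\Gamma\to\Gamma'$ sends vertices to vertices and edges (legs) to edges (legs), linearly with integer slope $w(e)\in\mathbb{Z}_{>0}$ on each edge or leg $e$ (so $w(e)=\ell(\pi(e))/\ell(e)$). It is harmonic if for every vertex $v$ of $\Gamma$ the number $d_v=\sum_{e\ni v,\ \pi(e)=e'}w(e)$ is independent of the edge $e'$ adjacent to $\pi(v)$; the degree of $\pi$ is the sum of the $d_v$ over the fiber of any vertex. A tropical hyperelliptic cover of a genus-zero metric tree $T$ is a surjective degree-two harmonic map $\pi\colon\Gamma\to T$ satisfying, at every vertex $v$ of $\Gamma$, the local Riemann–Hurwitz condition $2-2g(v)=2d_v-\#\{e\ni v: w(e)=2\}$. A leg or edge of $T$ is a branch point if it is covered by a leg or edge of $\Gamma$ of weight $2$. *)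

From HB Require Import structures.
From mathcomp Require Import all_boot all_order all_algebra.
From mathcomp Require Import reals.
Set Implicit Arguments. Unset Strict Implicit. Unset Printing Implicit Defensive.
Import Order.TTheory GRing.Theory Num.Theory.
Local Open Scope ring_scope.

(** A metric graph: finite vertices, edges (each with two endpoints, the
    chosen orientation src/tgt carries no meaning) and unbounded legs (each
    attached to a vertex), a genus function and positive edge lengths.
    Legs have infinite length, so no length is recorded for them. *)
Record mgraph (R : realType) := MGraph {
  vert : finType;
  edge : finType;
  leg  : finType;
  esrc : edge -> vert;
  etgt : edge -> vert;
  legv : leg -> vert;
  gen  : vert -> nat;
  len  : edge -> R;
  len_pos : forall e, 0 < len e
}.

Section MetricGraphs.
Variable R : realType.

Definition inc (G : mgraph R) (v : vert G) (e : edge G) : bool :=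
  (esrc e == v) || (etgt e == v).

Definition adj (G : mgraph R) : rel (vert G) :=
  fun u v => [exists e : edge G,
     ((esrc e == u) && (etgt e == v)) || ((esrc e == v) && (etgt e == u))].

Definition connected_graph (G : mgraph R) : Prop :=
  forall u v : vert G, connect (@adj G) u v.

(** genus = b_1 + sum of vertex genera, b_1 = |E| - |V| + 1 *)
Definition genus (G : mgraph R) : int :=
  (#|edge G|%:Z - #|vert G|%:Z + 1 + (\sum_(v : vert G) gen v)%N%:Z)%R.

Definition is_tree (G : mgraph R) : Prop :=
  connected_graph G /\ (#|edge G| + 1 = #|vert G|)%N.

Record gmap (G H : mgraph R) := GMap {
  mV : vert G -> vert H;
  mE : edge G -> edge H;
  mL : leg G -> leg H;
  wE : edge G -> nat;
  wL : leg G -> nat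
}.

Definition is_morphism (G H : mgraph R) (p : gmap G H) : Prop :=
  [/\ (forall e, (0 < wE p e)%N),
      (forall l, (0 < wL p l)%N),
      (forall e,
          (mV p (esrc e) = esrc (mE p e) /\ mV p (etgt e) = etgt (mE p e)) \/
          (mV p (esrc e) = etgt (mE p e) /\ mV p (etgt e) = esrc (mE p e))),
      (forall l, legv (mL p l) = mV p (legv l))
    & (forall e, len (mE p e) = (wE p e)%:R * len e)].

Definition ldegE (G H : mgraph R) (p : gmap G H) (v : vert G) (e' : edge H) : nat :=
  (\sum_(e : edge G | inc v e && (mE p e == e')) wE p e)%N.

Definition ldegL (G H : mgraph R) (p : gmap G H) (v : vert G) (l' : leg H) : nat :=
  (\sum_(l : leg G | (legv l == v) && (mL p l == l')) wL p l)%N.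

Definition harmonic_with (G H : mgraph R) (p : gmap G H) (d : vert G -> nat) : Prop :=
  forall v : vert G,
    (forall e' : edge H, inc (mV p v) e' -> ldegE p v e' = d v) /\
    (forall l' : leg H, legv l' = mV p v -> ldegL p v l' = d v).

Definition surjective_map (G H : mgraph R) (p : gmap G H) : Prop :=
  [/\ (forall v', exists v, mV p v = v'),
      (forall e', exists e, mE p e = e')
    & (forall l', exists l, mL p l = l')].

Definition nram (G H : mgraph R) (p : gmap G H) (v : vert G) : nat :=
  (#|[pred e : edge G | inc v e && (wE p e == 2%N)]|
   + #|[pred l : leg G | (legv l == v) && (wL p l == 2%N)]|)%N.

(** tropical hyperelliptic cover: surjective harmonic morphism of degree two
    satisfying the local Riemann-Hurwitz condition at every vertex. *)
Definition hyperelliptic_cover (G H : mgraph R) (p : gmap G H) : Prop :=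
  is_morphism p /\ surjective_map p /\
  exists d : vert G -> nat,
    [/\ harmonic_with p d,
        (forall v' : vert H, (\sum_(v : vert G | mV p v == v') d v)%N = 2%N)
      & (forall v : vert G,
           (2%:Z - 2%:Z * (gen v)%:Z = 2%:Z * (d v)%:Z - (nram p v)%:Z)%R)].

Definition branched_at_leg (G H : mgraph R) (p : gmap G H) (l' : leg H) : Prop :=
  exists l : leg G, mL p l = l' /\ wL p l = 2%N.

Definition cover_iso (G1 G2 H : mgraph R) (p1 : gmap G1 H) (p2 : gmap G2 H) : Prop :=
  exists (fV : vert G1 -> vert G2) (fE : edge G1 -> edge G2) (fL : leg G1 -> leg G2),
    [/\ bijective fV, bijective fE & bijective fL] /\
    (forall e,
       (fV (esrc e) = esrc (fE e) /\ fV (etgt e) = etgt (fE e)) \/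
       (fV (esrc e) = etgt (fE e) /\ fV (etgt e) = esrc (fE e))) /\
    (forall l, legv (fL l) = fV (legv l)) /\
    (forall v, gen (fV v) = gen v) /\
    (forall e, len (fE e) = len e) /\
    [/\ (forall v, mV p2 (fV v) = mV p1 v),
        (forall e, mE p2 (fE e) = mE p1 e),
        (forall l, mL p2 (fL l) = mL p1 l),
        (forall e, wE p2 (fE e) = wE p1 e)
      & (forall l, wL p2 (fL l) = wL p1 l)].

Definition g2_cover (G T : mgraph R) (p : gmap G T) : Prop :=
  [/\ connected_graph G, genus G = 2%:Z, #|leg G| = 6%N,
      hyperelliptic_cover p
    & forall l' : leg T, branched_at_leg p l'].

End MetricGraphs.

From mathcomp Require Import all_boot all_algebra.
From mathcomp Require Import reals.
From mathcomp Require Import zify.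
Set Implicit Arguments. Unset Strict Implicit. Unset Printing Implicit Defensive.

(* Since T is a tree and it has an even number of legs, there is exactly one
   set S of edges of T such that every vertex meets S an odd number of times
   iff it carries an odd number of legs.  In any cover, Riemann-Hurwitz makes
   the edges covered by a weight-2 edge satisfy this parity condition (a
   vertex of local degree 2 and genus g meets 2 + 2g ramified directions, one
   of local degree 1 meets none), so they form S.  Hence the shape of the
   cover is forced: a vertex of T splits into two preimages iff it meets
   neither S nor a leg, otherwise it has one preimage of genus (n - 2)/2,
   n being the number of S-edges and legs at it; edges of S have one lift of
   weight 2, the others two lifts of weight 1.  As H^1(T, Z/2) = 0 the two
   sheets can be labelled coherently along T, and matching labels gives the
   isomorphism between any two covers.  The cover built from S has this shape
   and genus 2 by the handshake count on T. *)

Section NatSums.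
Variables (I : finType) (P : pred I) (F : I -> nat).

Lemma leq_sum_term a : P a -> F a <= \sum_(i | P i) F i.
Proof. by move=> Pa; rewrite (bigD1 a) //= leq_addr. Qed.

Lemma leq_sum_term2 a b : P a -> P b -> a != b -> F a + F b <= \sum_(i | P i) F i.
Proof.
move=> Pa Pb ab; rewrite (bigD1 a) //= (bigD1 b) /=; last by rewrite Pb eq_sym ab.
by rewrite addnA leq_addr.
Qed.

Lemma leq_sum_term3 a b c : P a -> P b -> P c -> a != b -> a != c -> b != c ->
  F a + F b + F c <= \sum_(i | P i) F i.
Proof.
move=> Pa Pb Pc ab ac bc; rewrite (bigD1 a) //= (bigD1 b) /=; last by rewrite Pb eq_sym ab.
rewrite (bigD1 c) /=; last by rewrite Pc eq_sym ac eq_sym bc.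
by rewrite !addnA leq_addr.
Qed.

Lemma sum_gt0_term : 0 < \sum_(i | P i) F i -> exists i, P i /\ 0 < F i.
Proof.
rewrite lt0n sum_nat_eq0 => /forallPn[i]; rewrite negb_imply -lt0n => /andP[Pi Fi].
by exists i.
Qed.

End NatSums.

Lemma sum_nat_bool_card (I : finType) (A : {set I}) (b : pred I) :
  \sum_(i in A) (b i : nat) = #|[set i in A | b i]|.
Proof.
rewrite big_mkcond /= -sum1_card [RHS]big_mkcond /=; apply: eq_bigr => i _.
by rewrite inE; case: (i \in A); case: (b i).
Qed.

Lemma sum_eq1 (I : finType) (x : I) : \sum_(v : I) (x == v : nat) = 1.
Proof. by rewrite (bigD1 x) //= eqxx big1 // => v /negbTE; rewrite eq_sym => ->. Qed.

Lemma connect_cross (T : finType) (r : rel T) (A : pred T) x y :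
  x \in A -> y \notin A -> connect r x y ->
  exists x' y', [/\ x' \in A, y' \notin A & r x' y'].
Proof.
move=> xA yA /connectP[p]; elim: p x xA => [|z p IH] x xA /=.
  by move=> _ eyx; rewrite eyx xA in yA.
case/andP=> rxz pz ey.
case zA: (z \in A); first exact: IH zA pz ey.
by exists x, z; rewrite zA.
Qed.

Lemma inj_surj_bij (A B : finType) (f : A -> B) :
  injective f -> (forall y, exists x, f x = y) -> bijective f.
Proof.
move=> f_inj f_surj; apply: inj_card_bij => //.
have f_surjb y : exists x, f x == y by have [x <-] := f_surj y; exists x.
have fgK : cancel (fun y => xchoose (f_surjb y)) f.
  by move=> y; exact/eqP/(xchooseP (f_surjb y)).
exact: leq_card (can_inj fgK).
Qed.

Lemma sum_sig (I : finType) (P Q : pred I) (F : I -> nat) :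
  \sum_(x : {x | P x} | Q (sval x)) F (sval x) = \sum_(i | P i && Q i) F i.
Proof.
rewrite (reindex_omap (sval : {x | P x} -> I) insub); last first.
  by move=> i /andP[Pi _]; rewrite insubT.
by apply: eq_bigl => -[i Pi] /=; rewrite insubT ?Pi /= eqxx andbT.
Qed.

Lemma sum_pair (A B : finType) (P : pred (A * B)) (F : A * B -> nat) :
  \sum_(z | P z) F z = \sum_(a : A) \sum_(b : B | P (a, b)) F (a, b).
Proof. by rewrite pair_big_dep; apply: eq_big => -[a b]. Qed.

Lemma sum_pair_fst (A B : finType) (P : pred (A * B)) (F : A * B -> nat) a :
  \sum_(z | P z && (z.1 == a)) F z = \sum_(b | P (a, b)) F (a, b).
Proof.
rewrite sum_pair (bigD1 a) //= [X in _ + X]big1 ?addn0.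
  by apply: eq_bigl => b; rewrite eqxx andbT.
by move=> a' na; rewrite big_pred0 // => b; rewrite (negbTE na) andbF.
Qed.

Lemma sum_bool (C : pred bool) (F : bool -> nat) :
  \sum_(b | C b) F b = (if C true then F true else 0) + (if C false then F false else 0).
Proof. by rewrite big_mkcond big_bool. Qed.

Section Relabel.
Variables (K : eqType) (A1 A2 : finType) (lab1 : A1 -> K) (lab2 : A2 -> K).
Hypotheses (lab1_inj : injective lab1) (lab2_inj : injective lab2).
Hypothesis im12 : forall a, exists b, lab2 b = lab1 a.
Hypothesis im21 : forall b, exists a, lab1 a = lab2 b.

Lemma relabel_ex a : exists b, lab2 b == lab1 a.
Proof. by have [b <-] := im12 a; exists b. Qed.

Definition relabel a := xchoose (relabel_ex a).

Lemma relabelE a : lab2 (relabel a) = lab1 a.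
Proof. exact/eqP/(xchooseP (relabel_ex a)). Qed.

Lemma relabel_bij : bijective relabel.
Proof.
apply: inj_surj_bij => [a1 a2 eq12 | b]; first by apply: lab1_inj; rewrite -!relabelE eq12.
by have [a ab] := im21 b; exists a; apply: lab2_inj; rewrite relabelE.
Qed.

End Relabel.

(** * Edge sets of a tree and their parities *)

Section TreeParity.
Variables (R : realType) (G : mgraph R).
Implicit Types (S : {set edge G}) (u v x y : vert G) (e f : edge G).

Definition joins e u v :=
  ((esrc e == u) && (etgt e == v)) || ((esrc e == v) && (etgt e == u)).

Definition adj_in S : rel (vert G) := fun u v => [exists e in S, joins e u v].

Lemma inc_esrc e : inc (esrc e) e.
Proof. by rewrite /inc eqxx. Qed.

Lemma inc_etgt e : inc (etgt e) e.
Proof. by rewrite /inc eqxx orbT. Qed.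

Lemma joinsC e u v : joins e u v = joins e v u.
Proof. by rewrite /joins orbC. Qed.

Lemma joins_inc e u v : joins e u v -> inc u e.
Proof. by rewrite /inc; case/orP=> /andP[/eqP-> /eqP->]; rewrite eqxx ?orbT. Qed.

Lemma adj_in_sym S : symmetric (adj_in S).
Proof. by move=> u v; apply: eq_existsb => e; rewrite joinsC. Qed.

Lemma adj_sym : symmetric (@adj R G).
Proof. by move=> u v; apply: eq_existsb => e; exact: joinsC. Qed.

Lemma inc_ends e a b : inc a e -> inc b e -> a != b ->
  (esrc e = a /\ etgt e = b) \/ (esrc e = b /\ etgt e = a).
Proof.
rewrite /inc => /orP[]/eqP ea /orP[]/eqP eb; rewrite -ea -eb ?eqxx //;
  by [left | right].
Qed.

Definition component S a := [set x | connect (adj_in S) a x].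

Lemma component_edge S a f : f \in S ->
  (esrc f \in component S a) = (etgt f \in component S a).
Proof.
move=> fS; have ef : adj_in S (esrc f) (etgt f).
  by apply/existsP; exists f; rewrite fS /joins !eqxx.
rewrite !inE; apply/idP/idP => h; apply: (connect_trans h); apply: connect1 => //.
by rewrite adj_in_sym.
Qed.

Definition inner_edges S (A : {set vert G}) :=
  [set e in S | (esrc e \in A) && (etgt e \in A)].

Lemma inner_edges_grow S (A : {set vert G}) a w :
  (forall u v, connect (adj_in S) u v) -> a \in A -> w \notin A ->
  exists2 y, y \notin A & #|inner_edges S A| < #|inner_edges S (y |: A)|.
Proof.
move=> conn aA wA.
have [x [y [xA yA /existsP[e /andP[eS he]]]]] := connect_cross aA wA (conn a w).
exists y => //; apply: proper_card; apply/properP; split.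
  by apply/subsetP => f; rewrite !inE => /andP[-> /andP[-> ->]]; rewrite !orbT.
exists e.
  by rewrite !inE eS; case/orP: he => /andP[/eqP-> /eqP->]; rewrite eqxx xA !orbT.
by rewrite !inE eS; case/orP: he => /andP[/eqP-> /eqP->]; rewrite (negbTE yA) ?andbF.
Qed.

Lemma connected_card_vert S : (forall u v, connect (adj_in S) u v) ->
  #|vert G| <= #|S| + 1.
Proof.
move=> conn; case: (posnP #|vert G|) => [->//|/card_gt0P[a _]].
have grow k : k < #|vert G| ->
    exists A : {set vert G}, #|A| = k.+1 /\ k <= #|inner_edges S A|.
  elim: k => [|k IH] kV; first by exists [set a]; rewrite cards1.
  have [A [cA kA]] := IH (ltnW kV).
  have /subsetPn[w _ wA] : ~~ ([set: vert G] \subset A).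
    by apply/negP => /subset_leq_card; rewrite cardsT cA leqNgt kV.
  have [b bA] : exists b, b \in A by apply/card_gt0P; rewrite cA.
  have [y yA lt] := inner_edges_grow conn bA wA.
  exists (y |: A); split; first by rewrite cardsU1 yA cA.
  exact: leq_ltn_trans kA lt.
have [|A [_ kA]] := grow #|vert G|.-1; first by rewrite ltn_predL; apply/card_gt0P; exists a.
have : #|inner_edges S A| <= #|S|.
  by apply/subset_leq_card/subsetP => f; rewrite inE => /andP[].
lia.
Qed.

Hypothesis tree : is_tree G.

Lemma tree_bridge e : ~~ connect (adj_in (~: [set e])) (esrc e) (etgt e).
Proof.
apply/negP => c0.
have conn u v : connect (adj_in (~: [set e])) u v.
  apply: connect_sub (tree.1 u v) => x y /existsP[f jf].
  have [fe | nfe] := eqVneq f e.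
    subst f; case/orP: jf => /andP[/eqP <- /eqP <-] //.
    by rewrite (sym_connect_sym (@adj_in_sym _)).
  by apply: connect1; apply/existsP; exists f; rewrite !inE nfe.
have := connected_card_vert conn; rewrite cardsC1 -tree.2.
have : 0 < #|edge G| by apply/card_gt0P; exists e.
lia.
Qed.

Lemma tree_loopfree e : esrc e != etgt e.
Proof. by apply/eqP => h; have := tree_bridge e; rewrite h connect0. Qed.

Lemma inc_addb v e : inc v e = (esrc e == v) (+) (etgt e == v).
Proof.
rewrite /inc; case: (esrc e =P v) => [<-|]; case: (etgt e =P esrc e) => //=.
by move=> h; have := tree_loopfree e; rewrite h eqxx.
Qed.

Definition parity S v := \big[addb/false]_(e in S) inc v e.

Definition symdiff (A B : {set edge G}) := (A :\: B) :|: (B :\: A).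

Lemma in_symdiff A B e : (e \in symdiff A B) = (e \in A) (+) (e \in B).
Proof. by rewrite !inE; case: (e \in A); case: (e \in B). Qed.

Lemma parity_symdiff A B v : parity (symdiff A B) v = parity A v (+) parity B v.
Proof.
rewrite /parity !(big_mkcond (fun e => e \in _)) -big_split /=.
apply: eq_bigr => e _; rewrite in_symdiff.
by case: (e \in A); case: (e \in B); case: (inc v e).
Qed.

Lemma parity_set0 v : parity set0 v = false.
Proof. by rewrite /parity big_set0. Qed.

Lemma parity_set1 e v : parity [set e] v = inc v e.
Proof. by rewrite /parity big_set1. Qed.

Lemma big_addb_pred1 (A : {set vert G}) x :
  \big[addb/false]_(v in A) (x == v) = (x \in A).
Proof.
case xA: (x \in A).
  by rewrite (bigD1 x) //= eqxx big1 // => v /andP[_ /negbTE]; rewrite eq_sym.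
by rewrite big1 // => v vA; apply/negbTE; apply: contraTneq vA => <-; rewrite xA.
Qed.

Lemma big_addb_inc (A : {set vert G}) e :
  \big[addb/false]_(v in A) inc v e = (esrc e \in A) (+) (etgt e \in A).
Proof.
under eq_bigr => v _ do rewrite inc_addb.
by rewrite big_split /= !big_addb_pred1.
Qed.

(* Summing the parities over the component of one endpoint of an edge e0 of S
   after deleting e0 counts every other edge twice and e0 once. *)
Lemma tree_even_set0 S : (forall v, ~~ parity S v) -> S = set0.
Proof.
move=> ev; case: (set_0Vmem S) => // -[e0 e0S]; exfalso.
pose K := component (~: [set e0]) (esrc e0).
have : \big[addb/false]_(v in K) parity S v = false.
  by rewrite big1 // => v _; apply/negbTE.
rewrite /parity exchange_big /=.
under eq_bigr => e _ do rewrite big_addb_inc.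
rewrite (bigD1 e0) //= big1.
  by rewrite !inE connect0 /=; have /negbTE -> := tree_bridge e0.
by move=> e /andP[_ ne]; rewrite component_edge ?addbb // !inE.
Qed.

Lemma parity_inj S1 S2 : parity S1 =1 parity S2 -> S1 = S2.
Proof.
move=> eq12; have /tree_even_set0 S12 : forall v, ~~ parity (symdiff S1 S2) v.
  by move=> v; rewrite parity_symdiff eq12 addbb.
apply/setP => e; have := in_symdiff S1 S2 e; rewrite S12 inE.
by case: (e \in S1); case: (e \in S2).
Qed.

Lemma connect_parity x y : connect (@adj R G) x y ->
  exists P, forall v, parity P v = (v == x) (+) (v == y).
Proof.
move/connectP=> [p]; elim: p x => [|z p IH] x /=.
  by move=> _ ->; exists set0 => v; rewrite parity_set0 addbb.
case/andP=> /existsP[e he] pz ey.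
have [P HP] := IH z pz ey.
exists (symdiff P [set e]) => v; rewrite parity_symdiff parity_set1 HP inc_addb.
case/orP: he => /andP[/eqP-> /eqP->]; rewrite ![_ == v]eq_sym;
  by case: (v == x); case: (v == y); case: (v == z).
Qed.

(* The vertex r absorbs the parity defect when s has odd length. *)
Lemma parity_realize r (s : seq (vert G)) :
  exists S, forall v, parity S v = odd (count_mem v s) (+) (odd (size s) && (v == r)).
Proof.
elim: s => [|x s [S HS]]; first by exists set0 => v; rewrite parity_set0.
have [P HP] := connect_parity (tree.1 x r).
exists (symdiff S P) => v; rewrite parity_symdiff HS HP /= oddD oddb [x == v]eq_sym.
by case: (v == x); case: (v == r); case: (odd _); case: (odd _).
Qed.

(* Induction on A: if the inductive solution fails on e0 in A, flip it on the
   component of esrc e0 in A minus e0, which does not contain etgt e0 since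
   e0 is a bridge. *)
Lemma tree_coboundary_on (A : {set edge G}) (c : edge G -> bool) :
  exists tau : vert G -> bool,
    forall e, e \in A -> tau (esrc e) (+) tau (etgt e) = c e.
Proof.
elim: {A}_.+1 {-2}A (ltnSn #|A|) => // n IH A lt_An.
case: (set_0Vmem A) => [-> | [e0 e0A]]; first by exists (fun _ => false) => e; rewrite inE.
have [|t0 Ht0] := IH (A :\ e0); first by rewrite (cardsD1 e0) e0A in lt_An.
have {}Ht0 e : e \in A -> e != e0 -> t0 (esrc e) (+) t0 (etgt e) = c e.
  by move=> eA ne; apply: Ht0; rewrite !inE ne.
have [ok | flip] := eqVneq (t0 (esrc e0) (+) t0 (etgt e0)) (c e0).
  by exists t0 => e eA; have [-> | ne] := eqVneq e e0; [| exact: Ht0].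
pose K := component (A :\ e0) (esrc e0).
have e0K : etgt e0 \notin K.
  apply: contraNN (tree_bridge e0); rewrite inE; apply: connect_sub => x y.
  move=> /existsP[f /andP[fA jf]]; apply: connect1; apply/existsP; exists f.
  by move: fA; rewrite !inE => /andP[-> _].
exists (fun x => t0 x (+) (x \in K)) => e eA; have [-> | ne] := eqVneq e e0.
  rewrite (negbTE e0K) inE connect0 addbF.
  by move: flip; case: (t0 _); case: (t0 _); case: (c e0).
rewrite (@component_edge (A :\ e0) _ e) -?(Ht0 e eA ne); last by rewrite !inE ne.
by case: (t0 (esrc e)); case: (t0 (etgt e)); case: (etgt e \in K).
Qed.

Lemma tree_coboundary (c : edge G -> bool) :
  exists tau : vert G -> bool, forall e, tau (esrc e) (+) tau (etgt e) = c e.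
Proof. by have [tau Htau] := tree_coboundary_on setT c; exists tau => e; exact: Htau. Qed.

Definition nlegs v := #|[pred l : leg G | legv l == v]|.

Lemma nlegs_count v : nlegs v = count_mem v [seq legv l | l <- enum (leg G)].
Proof.
rewrite count_map /nlegs cardE -size_filter; congr size.
by rewrite /enum_mem filter_predT; apply: eq_filter.
Qed.

Lemma leg_parity_set : ~~ odd #|leg G| ->
  exists S, forall v, parity S v = odd (nlegs v).
Proof.
move=> ev; case: (pickP (@predT (vert G))) => [r _ | none].
  have [S HS] := parity_realize r [seq legv l | l <- enum (leg G)].
  by exists S => v; rewrite HS size_map -cardE (negbTE ev) addbF nlegs_count.
by exists set0 => v; have := none v.
Qed.

Definition deg_in S v := \sum_(e in S) (inc v e : nat).
Definition nbranch S v := deg_in S v + nlegs v.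
Definition splits S v := nbranch S v == 0.

Lemma odd_deg_in S v : odd (deg_in S v) = parity S v.
Proof.
rewrite /deg_in (big_morph odd oddD (erefl : odd 0 = false)).
by apply: eq_bigr => e _; rewrite oddb.
Qed.

Lemma sum_inc_eq2 e : \sum_v (inc v e : nat) = 2.
Proof.
rewrite (eq_bigr (fun v => (esrc e == v : nat) + (etgt e == v))); last first.
  move=> v _; rewrite /inc; case h1: (esrc e == v); case h2: (etgt e == v) => //=.
  by have := tree_loopfree e; rewrite (eqP h1) (eqP h2) eqxx.
by rewrite big_split /= !sum_eq1.
Qed.

Lemma sum_nbranch S : \sum_v nbranch S v = 2 * #|S| + #|leg G|.
Proof.
rewrite big_split /=; congr (_ + _).
  rewrite /deg_in exchange_big /= (eq_bigr (fun _ => 2)); last by move=> e _; exact: sum_inc_eq2.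
  by rewrite sum_nat_const mulnC.
rewrite -[#|leg G|]sum1_card (eq_bigr (fun v => \sum_l (legv l == v : nat))); last first.
  by move=> v _; rewrite /nlegs -sum1_card big_mkcond.
by rewrite exchange_big; apply: eq_bigr => l _; exact: sum_eq1.
Qed.

End TreeParity.

(** * The shape of a hyperelliptic cover *)

(* [sV] and [sE] identify the vertices and edges of G with the pairs (v', b)
   and (e', b) of T, where b may be true only over split vertices and over
   edges outside S; this data determines the cover up to isomorphism. *)
Record sheet_labelling (R : realType) (T G : mgraph R) (p : gmap G T)
    (S : {set edge T}) (sV : vert G -> bool) (sE : edge G -> bool) : Prop := {
  lab_inj : injective (fun v => (mV p v, sV v));
  lab_surj : forall v' b, (b ==> splits S v') -> exists v, mV p v = v' /\ sV v = b;
  lab_splits : forall v, sV v ==> splits S (mV p v);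
  labE_inj : injective (fun e => (mE p e, sE e));
  labE_surj : forall e' b, (b ==> (e' \notin S)) -> exists e, mE p e = e' /\ sE e = b;
  labE_notin : forall e, sE e ==> (mE p e \notin S);
  lab_inc : forall e x, inc x e -> sV x = sE e && splits S (mV p x);
  lab_wE : forall e, wE p e = if mE p e \in S then 2 else 1;
  lab_mL_inj : injective (mL p);
  lab_mL_surj : forall l', exists l, mL p l = l';
  lab_wL : forall l, wL p l = 2;
  lab_legv : forall l, sV (legv l) = false;
  lab_gen : forall v, gen v = (nbranch S (mV p v) - 2)./2 }.

Section CoverShape.
Variables (R : realType) (T G : mgraph R) (p : gmap G T) (d : vert G -> nat).
Hypothesis tree : is_tree T.
Hypothesis connG : connected_graph G.
Hypothesis legsG : 0 < #|leg G|.
Hypothesis morph : is_morphism p.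
Hypothesis surj : surjective_map p.
Hypothesis harm : harmonic_with p d.
Hypothesis fiber_d : forall v', \sum_(v | mV p v == v') d v = 2.
Hypothesis RH : forall v,
  (2%:Z - 2%:Z * (gen v)%:Z = 2%:Z * (d v)%:Z - (nram p v)%:Z)%R.
Hypothesis branched : forall l', branched_at_leg p l'.

Lemma wE_gt0 e : 0 < wE p e.
Proof. by case: morph => wE_pos _ _ _ _; exact: wE_pos. Qed.

Lemma wL_gt0 l : 0 < wL p l.
Proof. by case: morph => _ wL_pos _ _ _; exact: wL_pos. Qed.

Lemma mV_ends e :
  (mV p (esrc e) = esrc (mE p e) /\ mV p (etgt e) = etgt (mE p e)) \/
  (mV p (esrc e) = etgt (mE p e) /\ mV p (etgt e) = esrc (mE p e)).
Proof. by case: morph => _ _ ends _ _; exact: ends. Qed.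

Lemma legv_mL l : legv (mL p l) = mV p (legv l).
Proof. by case: morph => _ _ _ legs _; exact: legs. Qed.

Lemma inc_mV v e : inc v e -> inc (mV p v) (mE p e).
Proof.
rewrite /inc; case: (mV_ends e) => -[h1 h2] /orP[]/eqP<-;
  by rewrite ?h1 ?h2 eqxx ?orbT.
Qed.

Lemma inc_lift e v' : inc v' (mE p e) -> exists x, inc x e /\ mV p x = v'.
Proof.
rewrite /inc; case: (mV_ends e) => -[h1 h2] /orP[]/eqP<-;
  by [exists (esrc e); rewrite eqxx | exists (etgt e); rewrite eqxx ?orbT].
Qed.

Lemma mV_ends_neq e : mV p (esrc e) != mV p (etgt e).
Proof.
by case: (mV_ends e) => -[-> ->]; rewrite ?(eq_sym (etgt _)) (tree_loopfree tree).
Qed.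

Lemma ldegE_eq v e' : inc (mV p v) e' -> ldegE p v e' = d v.
Proof. exact: (harm v).1. Qed.

Lemma ldegL_eq v l' : legv l' = mV p v -> ldegL p v l' = d v.
Proof. exact: (harm v).2. Qed.

Lemma wE_le_d v e : inc v e -> wE p e <= d v.
Proof.
move=> ve; rewrite -(ldegE_eq (inc_mV ve)).
by apply: (leq_sum_term (P := fun f => inc v f && (mE p f == mE p e))); rewrite ve eqxx.
Qed.

Lemma wL_le_d l : wL p l <= d (legv l).
Proof.
rewrite -(ldegL_eq (legv_mL l)).
by apply: (leq_sum_term (P := fun k => (legv k == legv l) && (mL p k == mL p l))); rewrite !eqxx.
Qed.

Lemma wE_lifts2 x e f : inc x e -> inc x f -> mE p e = mE p f -> e != f ->
  wE p e + wE p f <= d x.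
Proof.
move=> xe xf ef nef; rewrite -(ldegE_eq (inc_mV xe)).
apply: (leq_sum_term2 (P := fun g => inc x g && (mE p g == mE p e))) => //.
  by rewrite xe eqxx.
by rewrite xf ef eqxx.
Qed.

Lemma wL_lifts2 l k : legv l = legv k -> mL p l = mL p k -> l != k ->
  wL p l + wL p k <= d (legv l).
Proof.
move=> lk mlk nlk; rewrite -(ldegL_eq (legv_mL l)).
apply: (leq_sum_term2 (P := fun j => (legv j == legv l) && (mL p j == mL p l))) => //.
  by rewrite !eqxx.
by rewrite lk mlk !eqxx.
Qed.

(* The vertex v is joined to the attaching vertex of a leg, so either it
   carries a leg or an edge leaves it; both have positive weight. *)
Lemma d_gt0 v : 0 < d v.
Proof.
have [l0 _] : exists l0 : leg G, l0 \in leg G by apply/card_gt0P.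
have [-> | nv] := eqVneq v (legv l0); first exact: leq_trans (wL_gt0 l0) (wL_le_d l0).
have vA : v \in pred1 v by rewrite inE.
have lA : legv l0 \notin pred1 v by rewrite inE eq_sym.
have [x [y [xv _ /existsP[e je]]]] := connect_cross vA lA (connG v (legv l0)).
have ve : inc v e by move: xv je; rewrite inE => /eqP-> /joins_inc.
exact: leq_trans (wE_gt0 e) (wE_le_d ve).
Qed.

Lemma d_le2 v : d v <= 2.
Proof.
by rewrite -(fiber_d (mV p v)); apply: (leq_sum_term (P := fun w => mV p w == mV p v)).
Qed.

Lemma d12 v : d v = 1 \/ d v = 2.
Proof. by have := d_gt0 v; have := d_le2 v; lia. Qed.

Lemma fiber_d2 v u : mV p u = mV p v -> d v = 2 -> u = v.
Proof.
move=> uv dv; apply/eqP/negPn/negP => nuv.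
have vu : v != u by rewrite eq_sym.
have := leq_sum_term2 (P := fun w => mV p w == mV p v) d (eqxx _) (introT eqP uv) vu.
by rewrite fiber_d dv; have := d_gt0 u; lia.
Qed.

Lemma fiber_d1 v : d v = 1 ->
  exists u, [/\ u != v, mV p u = mV p v & forall w, mV p w = mV p v -> w = v \/ w = u].
Proof.
move=> dv; have fib := fiber_d (mV p v).
have [u [/andP[/eqP uv nuv] _]] :
    exists u, ((mV p u == mV p v) && (u != v)) /\ 0 < d u.
  by apply: sum_gt0_term; move: fib; rewrite (bigD1 v) //= dv; lia.
exists u; split => // w wv.
have [-> | nwv] := eqVneq w v; first by left.
have [-> | nwu] := eqVneq w u; first by right.
have [vu vw uw] : [/\ v != u, v != w & u != w] by rewrite ![_ == w]eq_sym eq_sym.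
have := leq_sum_term3 (P := fun w => mV p w == mV p v) d (eqxx _)
  (introT eqP uv) (introT eqP wv) vu vw uw.
by rewrite fib dv; have := d_gt0 u; have := d_gt0 w; lia.
Qed.

Lemma d2_inc e v' x : inc v' (mE p e) -> mV p x = v' -> d x = 2 -> inc x e.
Proof.
by move=> /inc_lift[y [ye yv]] xv dx; rewrite -(fiber_d2 (etrans yv (esym xv)) dx).
Qed.

Lemma wE2_d e x : wE p e = 2 -> inc x e -> d x = 2.
Proof. by move=> w2 /wE_le_d; rewrite w2; have := d_le2 x; lia. Qed.

Lemma wE2_lift_unique e f : mE p e = mE p f -> wE p f = 2 -> e = f.
Proof.
move=> ef wf; have [x [xf xv]] := inc_lift (inc_esrc (mE p f)).
have dx := wE2_d wf xf.
have xe : inc x e by apply: (d2_inc _ xv dx); rewrite ef inc_esrc.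
apply/eqP/negPn/negP => nef.
by have := wE_lifts2 xe xf ef nef; rewrite wf dx; have := wE_gt0 e; lia.
Qed.

Lemma lifts_at_most2 x e1 e2 e3 : inc x e1 -> inc x e2 -> inc x e3 ->
  mE p e2 = mE p e1 -> mE p e3 = mE p e1 -> e1 != e2 -> e1 != e3 -> e2 != e3 -> False.
Proof.
move=> x1 x2 x3 m2 m3 n12 n13 n23; have := d_le2 x.
have := leq_sum_term3 (P := fun g => inc x g && (mE p g == mE p e1)) (wE p)
  (a := e1) (b := e2) (c := e3).
rewrite -/(ldegE p x (mE p e1)) ldegE_eq ?inc_mV // x1 x2 x3 m2 m3 eqxx => /(_ isT isT isT).
by move=> /(_ n12 n13 n23); have := wE_gt0 e1; have := wE_gt0 e2; have := wE_gt0 e3; lia.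
Qed.

Lemma lift_at x e' : inc (mV p x) e' -> exists f, inc x f /\ mE p f = e'.
Proof.
move=> xe'; have : 0 < \sum_(g | inc x g && (mE p g == e')) wE p g.
  by rewrite -/(ldegE p x e') ldegE_eq ?d_gt0.
by case/sum_gt0_term => f [/andP[xf /eqP fe] _]; exists f.
Qed.

Lemma other_lift_d2 x f0 : d x = 2 -> inc x f0 -> wE p f0 = 1 ->
  exists2 f1, mE p f1 = mE p f0 & f1 != f0.
Proof.
move=> dx xf0 w1; have := ldegE_eq (inc_mV xf0).
rewrite dx /ldegE (bigD1 f0) /=; last by rewrite xf0 eqxx.
rewrite w1 => sum1.
have [|f1 [/andP[/andP[_ /eqP f1e] n10] _]] :=
  sum_gt0_term (P := fun g => (inc x g && (mE p g == mE p f0)) && (g != f0)) (F := wE p).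
  by lia.
by exists f1.
Qed.

Definition branch_edges := [set e' | [exists f, (mE p f == e') && (wE p f == 2)]].

Lemma wE_branch e : wE p e = if mE p e \in branch_edges then 2 else 1.
Proof.
rewrite inE; case: existsP => [[f /andP[/eqP fe /eqP wf]] | nf] /=.
  by rewrite (wE2_lift_unique (esym fe) wf).
have := wE_gt0 e; have := wE_le_d (inc_esrc e); have := d_le2 (esrc e).
have [w2 | ] := eqVneq (wE p e) 2; last lia.
by case: nf; exists e; rewrite eqxx w2.
Qed.

Lemma mL_inj : injective (mL p).
Proof.
suff lift2_unique l k : mL p l = mL p k -> wL p k = 2 -> l = k.
  move=> l1 l2 h; have [k [kl wk]] := branched (mL p l1).
  by rewrite (lift2_unique l1 k (esym kl) wk) (lift2_unique l2 k (etrans (esym h) (esym kl)) wk).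
move=> lk wk.
have dk : d (legv k) = 2 by have := wL_le_d k; have := d_le2 (legv k); lia.
have vlk : legv l = legv k by apply: fiber_d2 dk; rewrite -!legv_mL lk.
apply/eqP/negPn/negP => nlk.
by have := wL_lifts2 vlk lk nlk; rewrite vlk dk wk; have := wL_gt0 l; lia.
Qed.

Lemma wL_eq2 l : wL p l = 2.
Proof. by have [k [kl wk]] := branched (mL p l); rewrite -(mL_inj kl). Qed.

Lemma d_legv l : d (legv l) = 2.
Proof. by have := wL_le_d l; have := d_le2 (legv l); rewrite wL_eq2; lia. Qed.

Lemma nram_d1 v : d v = 1 -> nram p v = 0.
Proof.
move=> dv; rewrite /nram !eq_card0 // => [l | e]; rewrite !inE; apply/negP.
  by case/andP=> /eqP vl _; have := d_legv l; rewrite vl dv.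
by case/andP=> ve /eqP w2; have := wE_le_d ve; rewrite w2 dv.
Qed.

Lemma unbranched_d1 v : d v = 1 ->
  deg_in branch_edges (mV p v) = 0 /\ nlegs (mV p v) = 0.
Proof.
move=> dv; split.
  rewrite /deg_in big1 // => e'; rewrite inE => /existsP[f /andP[/eqP <- /eqP wf]].
  apply/eqP; rewrite eqb0; apply/negP => /inc_lift[x [xf xv]].
  by move: dv; rewrite (fiber_d2 (esym xv) (wE2_d wf xf)) (wE2_d wf xf).
rewrite /nlegs eq_card0 // => l'; rewrite inE; apply/negP => /eqP l'v.
have [l [ll' _]] := branched l'.
have vl : mV p v = mV p (legv l) by rewrite -legv_mL ll' l'v.
by move: dv; rewrite (fiber_d2 vl (d_legv l)) d_legv.
Qed.

Lemma card_wE2_inc v : d v = 2 ->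
  #|[pred e | inc v e && (wE p e == 2)]| = deg_in branch_edges (mV p v).
Proof.
move=> dv; rewrite /deg_in sum_nat_bool_card.
set A := [set e | inc v e && (wE p e == 2)].
have -> : #|[pred e | inc v e && (wE p e == 2)]| = #|A| by apply: eq_card => e; rewrite !inE.
have injA : {in A &, injective (mE p)}.
  by move=> e1 e2; rewrite !inE => /andP[_ _] /andP[_ /eqP w2] /wE2_lift_unique; apply.
rewrite -(card_in_imset injA); apply: eq_card => e'; rewrite [RHS]inE.
apply/imsetP/andP => [[e] | [be' ve']].
  rewrite inE => /andP[ve /eqP w2] ->; split; last exact: inc_mV.
  by rewrite inE; apply/existsP; exists e; rewrite eqxx w2.
move: be'; rewrite inE => /existsP[f /andP[/eqP fe /eqP wf]].
exists f => //; rewrite inE wf eqxx andbT.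
by apply: (d2_inc _ erefl dv); rewrite fe.
Qed.

Lemma card_legs_d2 v : d v = 2 ->
  #|[pred l | (legv l == v) && (wL p l == 2)]| = nlegs (mV p v).
Proof.
move=> dv; set B := [set l | legv l == v].
have -> : #|[pred l | (legv l == v) && (wL p l == 2)]| = #|B|.
  by apply: eq_card => l; rewrite !inE wL_eq2 eqxx andbT.
rewrite -(card_imset _ mL_inj) /nlegs; apply: eq_card => l'.
rewrite [RHS]inE; apply/imsetP/idP => [[l] | /eqP l'v].
  by rewrite inE => /eqP <- ->; rewrite legv_mL.
case: surj => _ _ /(_ l')[l ll']; exists l => //; rewrite inE; apply/eqP.
by apply: fiber_d2 dv; rewrite -legv_mL ll' l'v.
Qed.

Lemma nram_d2 v : d v = 2 -> nram p v = nbranch branch_edges (mV p v).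
Proof. by move=> dv; rewrite /nram /nbranch card_wE2_inc // card_legs_d2. Qed.

Lemma nram_RH v : d v = 2 -> nram p v = 2 + 2 * gen v.
Proof. by move=> dv; have := RH v; rewrite dv; lia. Qed.

Lemma gen_d1 v : d v = 1 -> gen v = 0.
Proof. by move=> dv; have := RH v; rewrite dv nram_d1 //; lia. Qed.

(* By Riemann-Hurwitz, every vertex of local degree 2 sees an even number
   of branch directions, and a vertex of local degree 1 sees none. *)
Lemma parity_branch_edges v' : parity branch_edges v' = odd (nlegs v').
Proof.
case: surj => /(_ v')[v <-] _ _; rewrite -odd_deg_in.
have [dv | dv] := d12 v; first by have [-> ->] := unbranched_d1 dv.
have := nram_RH dv; rewrite nram_d2 // /nbranch => h.
have : odd (deg_in branch_edges (mV p v) + nlegs (mV p v)) = false.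
  by rewrite h oddD oddM.
by rewrite oddD; case: (odd _); case: (odd _).
Qed.

Variable S : {set edge T}.
Hypothesis parity_S : forall v', parity S v' = odd (nlegs v').

Lemma branch_edgesE : branch_edges = S.
Proof. by apply: (parity_inj tree) => v'; rewrite parity_branch_edges parity_S. Qed.

Lemma splits_d v : splits S (mV p v) = (d v == 1).
Proof.
rewrite /splits -branch_edgesE; have [dv | dv] := d12 v.
  by rewrite /nbranch; have [-> ->] := unbranched_d1 dv; rewrite dv.
by rewrite -nram_d2 // nram_RH // dv.
Qed.

Lemma d2_unsplit x : ~~ splits S (mV p x) -> d x = 2.
Proof. by rewrite splits_d; case: (d12 x) => ->. Qed.

Lemma gen_nbranch v : gen v = (nbranch S (mV p v) - 2)./2.
Proof.
rewrite -branch_edgesE; have [dv | dv] := d12 v.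
  by rewrite /nbranch; have [-> ->] := unbranched_d1 dv; rewrite gen_d1.
by rewrite -nram_d2 // nram_RH // addKn mul2n doubleK.
Qed.

Lemma wE_inS e : wE p e = if mE p e \in S then 2 else 1.
Proof. by rewrite -branch_edgesE wE_branch. Qed.

Definition sheet0 v := [pick u | mV p u == mV p v] != Some v.

Lemma sheet0_inj v w1 w2 : d v = 1 -> mV p w1 = mV p v -> mV p w2 = mV p v ->
  sheet0 w1 = sheet0 w2 -> w1 = w2.
Proof.
move=> dv h1 h2; rewrite /sheet0 h1 h2.
case: pickP => [a /eqP av | none]; last by have := none v; rewrite eqxx.
have [u [nuv uv fib]] := fiber_d1 dv.
have nvu : v != u by rewrite eq_sym.
case: (fib a av) => ->; case: (fib w1 h1) => ->; case: (fib w2 h2) => ->;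
  by rewrite /= ?eqxx //= ?(inj_eq Some_inj) ?nuv ?nvu.
Qed.

Lemma sheet0_fiber v w : d v = 1 -> mV p w = mV p v -> w != v ->
  sheet0 w = ~~ sheet0 v.
Proof.
move=> dv wv nwv; have : sheet0 w != sheet0 v.
  by apply: contra nwv => /eqP/(sheet0_inj dv wv erefl)->.
by case: (sheet0 w); case: (sheet0 v).
Qed.

Lemma addb_sheet0_ends f a b : inc a f -> inc b f -> a != b ->
  sheet0 (esrc f) (+) sheet0 (etgt f) = sheet0 a (+) sheet0 b.
Proof. by move=> af bf nab; case: (inc_ends af bf nab) => -[-> ->] //; rewrite addbC. Qed.

(* [sheet0] may flip along an edge between split vertices; [sheet_jump]
   records where, and correcting [sheet0] by a coboundary [tau] of it (which
   exists on a tree) gives labels that agree along every edge. *)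
Definition sheet_jump e' :=
  if [pick f | mE p f == e'] is Some f then sheet0 (esrc f) (+) sheet0 (etgt f)
  else false.

Lemma other_lift_end e f x : mE p f = mE p e -> f != e -> inc x e -> d x = 1 ->
  exists y, [/\ inc y f, mV p y = mV p x & sheet0 y = ~~ sheet0 x].
Proof.
move=> fe nfe xe dx.
have [y [yf yx]] : exists y, inc y f /\ mV p y = mV p x.
  by apply: inc_lift; rewrite fe inc_mV.
have nyx : y != x.
  apply/eqP => yx'; subst y; have := wE_lifts2 yf xe fe nfe.
  by rewrite dx; have := wE_gt0 f; have := wE_gt0 e; lia.
by exists y; rewrite (sheet0_fiber dx yx nyx).
Qed.

Lemma sheet_jumpE e : d (esrc e) = 1 -> d (etgt e) = 1 ->
  sheet0 (esrc e) (+) sheet0 (etgt e) = sheet_jump (mE p e).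
Proof.
move=> d1 d2; rewrite /sheet_jump.
case: pickP => [f /eqP fe | none]; last by have := none e; rewrite eqxx.
have [-> // | nfe] := eqVneq f e.
have [x [xf xv sx]] := other_lift_end fe nfe (inc_esrc e) d1.
have [y [yf yv sy]] := other_lift_end fe nfe (inc_etgt e) d2.
have nxy : x != y by apply: contraNneq (mV_ends_neq e) => xy; rewrite -xv -yv xy.
rewrite (addb_sheet0_ends xf yf nxy) sx sy.
by case: (sheet0 (esrc e)); case: (sheet0 (etgt e)).
Qed.

Variable tau : vert T -> bool.
Hypothesis tau_jump : forall e', tau (esrc e') (+) tau (etgt e') = sheet_jump e'.

Definition sheet v := splits S (mV p v) && (sheet0 v (+) tau (mV p v)).

(* When neither end of e splits, the two lifts of mE p e are parallel edges
   and [pick] tells them apart. *)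
Definition sheetE e := (mE p e \notin S) &&
  [|| sheet (esrc e), sheet (etgt e) |
     [&& ~~ splits S (mV p (esrc e)), ~~ splits S (mV p (etgt e)) &
         [pick f | mE p f == mE p e] != Some e]].

Lemma sheet_unsplit v : ~~ splits S (mV p v) -> sheet v = false.
Proof. by rewrite /sheet => /negbTE ->. Qed.

Lemma sheet_edge e : splits S (mV p (esrc e)) -> splits S (mV p (etgt e)) ->
  sheet (esrc e) = sheet (etgt e).
Proof.
move=> s1 s2; rewrite /sheet s1 s2 /=.
move: s1 s2; rewrite !splits_d => /eqP d1 /eqP d2.
have := tau_jump (mE p e); rewrite -sheet_jumpE //.
have -> : tau (esrc (mE p e)) (+) tau (etgt (mE p e)) =
          tau (mV p (esrc e)) (+) tau (mV p (etgt e)).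
  by case: (mV_ends e) => -[-> ->] //; rewrite addbC.
by case: (sheet0 _); case: (sheet0 _); case: (tau _); case: (tau _).
Qed.

Lemma sheet_inc e x : inc x e -> sheet x = sheetE e && splits S (mV p x).
Proof.
move=> xe; case sx: (splits S (mV p x)); last by rewrite andbF sheet_unsplit ?sx.
have eS : mE p e \notin S.
  apply: contraL sx => eS; have w2 : wE p e = 2 by rewrite wE_inS eS.
  by rewrite splits_d (wE2_d w2 xe).
rewrite andbT /sheetE eS /=.
case/orP: xe => /eqP xe; subst x.
  case sy: (splits S (mV p (etgt e))).
    by rewrite -(sheet_edge sx sy) sx /=; case: (sheet _).
  by rewrite (sheet_unsplit (negbT sy)) sx /=; case: (sheet _).
case sy: (splits S (mV p (esrc e))).
  by rewrite (sheet_edge sy sx) sx /=; case: (sheet _); rewrite ?andbF.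
by rewrite (sheet_unsplit (negbT sy)) sx /=; case: (sheet _); rewrite ?andbF.
Qed.

Lemma sheet_inj : injective (fun v => (mV p v, sheet v)).
Proof.
move=> v1 v2 [h12 hs]; have [dv | dv] := d12 v1; last exact: esym (fiber_d2 (esym h12) dv).
have s1 : splits S (mV p v1) by rewrite splits_d dv.
move: hs; rewrite /sheet -h12 s1 /= => hs.
apply: (sheet0_inj dv erefl (esym h12)).
by move: hs; case: (sheet0 v1); case: (sheet0 v2); case: (tau _).
Qed.

Lemma sheet_surj v' b : (b ==> splits S v') -> exists v, mV p v = v' /\ sheet v = b.
Proof.
case: surj => /(_ v')[v <-] _ _ hb.
case sv: (splits S (mV p v)); last first.
  by exists v; rewrite sheet_unsplit ?sv //; move: hb; rewrite sv; case: b.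
have dv : d v = 1 by apply/eqP; rewrite -splits_d.
have [u [nuv uv _]] := fiber_d1 dv.
have [<- | nb] := eqVneq (sheet v) b; first by exists v.
exists u; split => //; move: nb; rewrite /sheet uv sv /= (sheet0_fiber dv uv nuv).
by case: b {hb}; case: (sheet0 v); case: (tau _).
Qed.

Lemma sheetE_unsplit e :
  ~~ splits S (esrc (mE p e)) -> ~~ splits S (etgt (mE p e)) ->
  sheetE e = (mE p e \notin S) && ([pick f | mE p f == mE p e] != Some e).
Proof.
move=> n1 n2.
have [m1 m2] : ~~ splits S (mV p (esrc e)) /\ ~~ splits S (mV p (etgt e)).
  by case: (mV_ends e) => -[-> ->].
by rewrite /sheetE !sheet_unsplit // m1 m2.
Qed.

Lemma sheetE_split_inj e1 e2 v' : mE p e1 = mE p e2 -> sheetE e1 = sheetE e2 ->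
  inc v' (mE p e1) -> splits S v' -> e1 = e2.
Proof.
move=> h12 hs v'e1 sv; have v'e2 : inc v' (mE p e2) by rewrite -h12.
have [x1 [x1e m1]] := inc_lift v'e1; have [x2 [x2e m2]] := inc_lift v'e2.
have s1 := sheet_inc x1e; have s2 := sheet_inc x2e.
rewrite m1 sv andbT in s1; rewrite m2 sv andbT in s2.
have x12 : x1 = x2 by apply: sheet_inj; rewrite /= m1 m2 s1 s2 hs.
subst x2; have dx : d x1 = 1 by apply/eqP; rewrite -splits_d m1.
apply/eqP/negPn/negP => ne; have := wE_lifts2 x1e x2e h12 ne.
by rewrite dx; have := wE_gt0 e1; have := wE_gt0 e2; lia.
Qed.

Lemma sheetE_inj : injective (fun e => (mE p e, sheetE e)).
Proof.
move=> e1 e2 [h12 hs].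
have [e1S | e1S] := boolP (mE p e1 \in S).
  by apply: (wE2_lift_unique h12); rewrite wE_inS -h12 e1S.
have [s1 | n1] := boolP (splits S (esrc (mE p e1))).
  exact: (sheetE_split_inj h12 hs (inc_esrc _) s1).
have [s2 | n2] := boolP (splits S (etgt (mE p e1))).
  exact: (sheetE_split_inj h12 hs (inc_etgt _) s2).
move: hs; rewrite !sheetE_unsplit -?h12 // e1S /=.
case: surj => /(_ (esrc (mE p e1)))[x xv] _ _.
have dx : d x = 2 by apply: d2_unsplit; rewrite xv.
have lift_x f : mE p f = mE p e1 -> inc x f.
  by move=> fe; apply: (d2_inc _ xv dx); rewrite fe inc_esrc.
case: pickP => [f0 /eqP f0e | none]; last by have := none e1; rewrite eqxx.
rewrite !(inj_eq Some_inj).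
case: (f0 =P e1) => [<- | n01]; case: (f0 =P e2) => [<- | n02] //= _.
apply/eqP/negPn/negP => n12.
apply: (lifts_at_most2 (lift_x e1 erefl) (lift_x e2 (esym h12)) (lift_x f0 f0e)) => //.
  by apply/eqP => e10; apply: n01.
by apply/eqP => e20; apply: n02.
Qed.

Lemma sheetE_surj_split e' v' b : inc v' e' -> splits S v' ->
  exists e, mE p e = e' /\ sheetE e = b.
Proof.
move=> v'e sv; have hb : b ==> splits S v' by rewrite sv implybT.
have [x [xv sx]] := sheet_surj hb.
have [f [xf fe]] : exists f, inc x f /\ mE p f = e' by apply: lift_at; rewrite xv.
by exists f; split; rewrite // -sx (sheet_inc xf) xv sv andbT.
Qed.

Lemma sheetE_surj_unsplit e' b :
  e' \notin S -> ~~ splits S (esrc e') -> ~~ splits S (etgt e') ->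
  exists e, mE p e = e' /\ sheetE e = b.
Proof.
move=> e'S n1 n2; case: surj => /(_ (esrc e'))[x xv] _ _.
have dx : d x = 2 by apply: d2_unsplit; rewrite xv.
have [f [xf fe]] : exists f, inc x f /\ mE p f = e' by apply: lift_at; rewrite xv inc_esrc.
have [f0 pick_f0] : exists f0, [pick g | mE p g == e'] = Some f0.
  by case: pickP => [f0 _ | none]; [exists f0 | have := none f; rewrite fe eqxx].
have f0e : mE p f0 = e' by move: pick_f0; case: pickP => // g /eqP ge [<-].
have sheetE_lift g : mE p g = e' -> sheetE g = (f0 != g).
  by move=> ge; rewrite sheetE_unsplit ge // e'S pick_f0 (inj_eq Some_inj).
have xf0 : inc x f0 by apply: (d2_inc _ xv dx); rewrite f0e inc_esrc.
have w1 : wE p f0 = 1 by rewrite wE_inS f0e (negbTE e'S).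
have [f1 f1e n10] := other_lift_d2 dx xf0 w1; rewrite f0e in f1e.
case: b; [exists f1 | exists f0]; rewrite sheetE_lift ?eqxx //.
by rewrite eq_sym n10.
Qed.

Lemma sheetE_surj e' b : (b ==> (e' \notin S)) -> exists e, mE p e = e' /\ sheetE e = b.
Proof.
move=> hb; have [e'S | e'S] := boolP (e' \in S).
  have b0 : b = false by move: hb; rewrite e'S; case: b.
  move: (e'S); rewrite -branch_edgesE inE => /existsP[f /andP[/eqP fe _]].
  by exists f; split; rewrite // /sheetE fe e'S b0.
have [s1 | n1] := boolP (splits S (esrc e')); first exact: sheetE_surj_split (inc_esrc e') s1.
have [s2 | n2] := boolP (splits S (etgt e')); first exact: sheetE_surj_split (inc_etgt e') s2.
exact: sheetE_surj_unsplit.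
Qed.

Lemma sheet_labelling_cover : sheet_labelling p S sheet sheetE.
Proof.
split.
- exact: sheet_inj.
- exact: sheet_surj.
- by move=> v; apply/implyP => /andP[].
- exact: sheetE_inj.
- exact: sheetE_surj.
- by move=> e; apply/implyP => /andP[].
- exact: sheet_inc.
- exact: wE_inS.
- exact: mL_inj.
- by case: surj.
- exact: wL_eq2.
- by move=> l; rewrite sheet_unsplit // splits_d d_legv.
- exact: gen_nbranch.
Qed.

End CoverShape.

Lemma g2_cover_labelling (R : realType) (T G : mgraph R) (p : gmap G T)
    (S : {set edge T}) :
  is_tree T -> (forall v', parity S v' = odd (nlegs v')) -> g2_cover p ->
  exists sV sE, sheet_labelling p S sV sE.
Proof.
move=> tree parity_S [connG _ legsG [morph [surj [d [harm fiber_d RH]]]] br].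
have [tau tau_jump] := tree_coboundary tree (sheet_jump p).
exists (sheet p S tau), (sheetE p S tau).
by apply: (sheet_labelling_cover (d := d)) => //; rewrite legsG.
Qed.

(** * Covers with labellings over the same edge set are isomorphic *)

Section LabellingIso.
Import GRing.Theory Num.Theory.
Variables (R : realType) (T G1 G2 : mgraph R) (p1 : gmap G1 T) (p2 : gmap G2 T).
Variables (S : {set edge T}) (sV1 : vert G1 -> bool) (sE1 : edge G1 -> bool).
Variables (sV2 : vert G2 -> bool) (sE2 : edge G2 -> bool).
Hypotheses (morph1 : is_morphism p1) (morph2 : is_morphism p2).
Hypotheses (lab1 : sheet_labelling p1 S sV1 sE1) (lab2 : sheet_labelling p2 S sV2 sE2).

Lemma labV_im12 v : exists u, (mV p2 u, sV2 u) = (mV p1 v, sV1 v).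
Proof. by have [u [mu su]] := lab_surj lab2 (lab_splits lab1 v); exists u; rewrite mu su. Qed.

Lemma labV_im21 u : exists v, (mV p1 v, sV1 v) = (mV p2 u, sV2 u).
Proof. by have [v [mv sv]] := lab_surj lab1 (lab_splits lab2 u); exists v; rewrite mv sv. Qed.

Lemma labE_im12 e : exists f, (mE p2 f, sE2 f) = (mE p1 e, sE1 e).
Proof. by have [f [mf sf]] := labE_surj lab2 (labE_notin lab1 e); exists f; rewrite mf sf. Qed.

Lemma labE_im21 f : exists e, (mE p1 e, sE1 e) = (mE p2 f, sE2 f).
Proof. by have [e [me se]] := labE_surj lab1 (labE_notin lab2 f); exists e; rewrite me se. Qed.

Lemma labL_im12 l : exists k, mL p2 k = mL p1 l.
Proof. exact: (lab_mL_surj lab2). Qed.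

Lemma labL_im21 k : exists l, mL p1 l = mL p2 k.
Proof. exact: (lab_mL_surj lab1). Qed.

Let fV := relabel labV_im12.
Let fE := relabel labE_im12.
Let fL := relabel labL_im12.

Lemma fV_lab v : (mV p2 (fV v), sV2 (fV v)) = (mV p1 v, sV1 v).
Proof. exact: (relabelE labV_im12). Qed.

Lemma fE_lab e : (mE p2 (fE e), sE2 (fE e)) = (mE p1 e, sE1 e).
Proof. exact: (relabelE labE_im12). Qed.

Lemma fL_mL l : mL p2 (fL l) = mL p1 l.
Proof. exact: (relabelE labL_im12). Qed.

Lemma fV_bij : bijective fV.
Proof. exact: (relabel_bij (lab_inj lab1) (lab_inj lab2) labV_im12 labV_im21). Qed.

Lemma fE_bij : bijective fE.
Proof. exact: (relabel_bij (labE_inj lab1) (labE_inj lab2) labE_im12 labE_im21). Qed.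

Lemma fL_bij : bijective fL.
Proof.
exact: (relabel_bij (lab_mL_inj lab1) (lab_mL_inj lab2) labL_im12 labL_im21).
Qed.

Lemma fV_mV v : mV p2 (fV v) = mV p1 v.
Proof. by have [] := fV_lab v. Qed.

Lemma fE_mE e : mE p2 (fE e) = mE p1 e.
Proof. by have [] := fE_lab e. Qed.

Lemma fE_sE e : sE2 (fE e) = sE1 e.
Proof. by have [] := fE_lab e. Qed.

Lemma fE_wE e : wE p2 (fE e) = wE p1 e.
Proof. by rewrite (lab_wE lab2) (lab_wE lab1) fE_mE. Qed.

Lemma fV_lift e x y : inc x e -> inc y (fE e) -> mV p2 y = mV p1 x -> y = fV x.
Proof.
move=> xe yf yx; apply: (lab_inj lab2); rewrite fV_lab yx.
by rewrite (lab_inc lab2 yf) (lab_inc lab1 xe) yx fE_sE.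
Qed.

Lemma fE_ends e :
  (fV (esrc e) = esrc (fE e) /\ fV (etgt e) = etgt (fE e)) \/
  (fV (esrc e) = etgt (fE e) /\ fV (etgt e) = esrc (fE e)).
Proof.
have lift x y : inc x e -> inc y (fE e) -> mV p2 y = mV p1 x -> fV x = y.
  by move=> xe yf yx; rewrite (fV_lift xe yf yx).
case: (mV_ends morph1 e) => -[b1 b2]; case: (mV_ends morph2 (fE e)) => -[c1 c2];
  rewrite fE_mE in c1 c2; [left | right | right | left]; split;
  by apply: lift; rewrite ?inc_esrc ?inc_etgt // ?c1 ?c2 ?b1 ?b2.
Qed.

Lemma fL_legv l : legv (fL l) = fV (legv l).
Proof.
apply: (lab_inj lab2); rewrite fV_lab -(legv_mL morph2) fL_mL (legv_mL morph1).
by rewrite !(lab_legv lab1, lab_legv lab2).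
Qed.

Lemma fE_len e : len (fE e) = len e.
Proof.
case: morph1 => _ _ _ _ len1; case: morph2 => _ _ _ _ len2.
have := len2 (fE e); rewrite fE_mE len1 fE_wE => /esym/mulfI; apply.
by rewrite pnatr_eq0 -lt0n (wE_gt0 morph1).
Qed.

Lemma cover_iso_of_labellings : cover_iso p1 p2.
Proof.
exists fV, fE, fL; split; first by split; [exact: fV_bij | exact: fE_bij | exact: fL_bij].
split; first exact: fE_ends.
split; first exact: fL_legv.
split; first by move=> v; rewrite (lab_gen lab2) (lab_gen lab1) fV_mV.
split; first exact: fE_len.
split.
- exact: fV_mV.
- exact: fE_mE.
- exact: fL_mL.
- exact: fE_wE.
- by move=> l; rewrite (lab_wL lab2) (lab_wL lab1).
Qed.

End LabellingIso.

(** * The canonical cover *)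

Section CanonicalCover.
Import GRing.Theory Num.Theory.
Variables (R : realType) (T : mgraph R).
Hypothesis tree : is_tree T.
Variable S : {set edge T}.
Hypothesis parity_S : forall v, parity S v = odd (nlegs v).

Lemma splits_notin v e : splits S v -> inc v e -> e \notin S.
Proof.
rewrite /splits /nbranch => /eqP nb0 ve; apply/negP => eS.
have : (inc v e : nat) <= deg_in S v by apply: (leq_sum_term (P := fun e => e \in S)).
by rewrite ve; lia.
Qed.

Lemma splits_nolegs v l : splits S v -> legv l != v.
Proof.
rewrite /splits /nbranch => /eqP nb0; apply/negP => /eqP lv.
have : 0 < nlegs v by apply/card_gt0P; exists l; rewrite inE lv.
lia.
Qed.

Lemma nbranch_halfK v : ~~ splits S v -> ((nbranch S v - 2)./2).*2 + 2 = nbranch S v.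
Proof.
move=> ns; have ev : ~~ odd (nbranch S v) by rewrite /nbranch oddD odd_deg_in parity_S addbb.
have ge2 : 2 <= nbranch S v by move: ns ev; rewrite /splits; case: (nbranch S v) => [|[|n]].
by rewrite halfK oddB // (negbTE ev) /= subn0 subnK.
Qed.

(* The canonical cover: a vertex of T is doubled iff it splits, an edge
   outside S is doubled with weight 1, an edge of S has a single lift of
   weight 2 and half the length, and every leg has a single lift of weight 2. *)
Definition cvert_ok (z : vert T * bool) := ~~ z.2 || splits S z.1.
Definition cedge_ok (z : edge T * bool) := ~~ z.2 || (z.1 \notin S).
Definition cvert := {z | cvert_ok z}.
Definition cedge := {z | cedge_ok z}.

Lemma cvert_of_ok v b : cvert_ok (v, b && splits S v).
Proof. by rewrite /cvert_ok /=; case: b; case: (splits S v). Qed.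

Definition cvert_of v b : cvert := exist _ (v, b && splits S v) (cvert_of_ok v b).

Definition cweight e : nat := if e \in S then 2 else 1.
Definition csrc (y : cedge) := cvert_of (esrc (sval y).1) (sval y).2.
Definition ctgt (y : cedge) := cvert_of (etgt (sval y).1) (sval y).2.
Definition clegv (l : leg T) := cvert_of (legv l) false.
Definition cgen (x : cvert) := ((nbranch S (sval x).1 - 2)./2)%N.
Definition clen (y : cedge) : R := len (sval y).1 / (cweight (sval y).1)%:R.

Lemma cweight_gt0 e : 0 < cweight e.
Proof. by rewrite /cweight; case: (_ \in _). Qed.

Lemma clen_gt0 y : (0 < clen y)%R.
Proof. by apply: divr_gt0; [exact: len_pos | rewrite ltr0n cweight_gt0]. Qed.

Definition cgraph : mgraph R :=
  @MGraph R cvert cedge (leg T) csrc ctgt clegv cgen clen clen_gt0.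

Definition cproj : gmap cgraph T :=
  @GMap R cgraph T (fun x : cvert => (sval x).1) (fun y : cedge => (sval y).1) id
    (fun y : cedge => cweight (sval y).1) (fun _ => 2).

Definition cdeg (x : cvert) : nat := if splits S (sval x).1 then 1 else 2.

Lemma cvert_ofE a b (x : cvert) :
  (cvert_of a b == x) = (a == (sval x).1) && ((b && splits S a) == (sval x).2).
Proof. by rewrite -val_eqE /=; case: (sval x). Qed.

Lemma cvert_unsplit (x : cvert) : ~~ splits S (sval x).1 -> (sval x).2 = false.
Proof. by have := svalP x; rewrite /cvert_ok => /orP[/negbTE // | ->]. Qed.

Lemma cinc (x : cvert) (y : cedge) : @inc R cgraph x y =
  inc (sval x).1 (sval y).1 && (((sval y).2 && splits S (sval x).1) == (sval x).2).
Proof.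
rewrite /inc /= /csrc /ctgt !cvert_ofE.
case h1: (esrc (sval y).1 == (sval x).1); case h2: (etgt (sval y).1 == (sval x).1) => //=.
- by have := tree_loopfree tree (sval y).1; rewrite (eqP h1) (eqP h2) eqxx.
- by rewrite (eqP h1) orbF.
- by rewrite (eqP h2).
Qed.

Lemma cproj_ldegE (x : cvert) e : inc (sval x).1 e -> ldegE cproj x e = cdeg x.
Proof.
move=> xe; rewrite /ldegE.
transitivity (\sum_(z | cedge_ok z && ((inc (sval x).1 z.1 &&
    ((z.2 && splits S (sval x).1) == (sval x).2)) && (z.1 == e))) cweight z.1).
  rewrite -(@sum_sig _ cedge_ok _ (fun z => cweight z.1)).
  by apply: eq_bigl => y; rewrite cinc.
under eq_bigl => z do rewrite andbA.
rewrite sum_pair_fst sum_bool /= xe.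
have := svalP x; have := @splits_notin (sval x).1 e.
rewrite /cdeg /cweight /cedge_ok /cvert_ok xe.
by case: (e \in S); case: (splits S _); case: (sval x).2 => //= /(_ isT isT).
Qed.

Lemma cproj_ldegL (x : cvert) l : legv l = (sval x).1 -> ldegL cproj x l = cdeg x.
Proof.
move=> lx; rewrite /ldegL /=.
have ns : ~~ splits S (sval x).1 by apply/negP => /(splits_nolegs l); rewrite lx eqxx.
rewrite (bigD1 l) /=; last by rewrite /clegv cvert_ofE lx (cvert_unsplit ns) !eqxx.
rewrite big1 ?addn0 /cdeg ?(negbTE ns) // => k /andP[/andP[_ /eqP ->]].
by rewrite eqxx.
Qed.

Lemma cproj_fiber v : \sum_(x : cvert | (sval x).1 == v) cdeg x = 2.
Proof.
rewrite (@sum_sig _ cvert_ok (fun z => z.1 == v) (fun z => if splits S z.1 then 1 else 2)).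
by rewrite sum_pair_fst sum_bool /cvert_ok /=; case: (splits S v).
Qed.

Lemma card_cinc_w2 (x : cvert) :
  #|[pred y : cedge | @inc R cgraph x y && (cweight (sval y).1 == 2)]| =
  if splits S (sval x).1 then 0 else deg_in S (sval x).1.
Proof.
set v := (sval x).1; set bx := (sval x).2; rewrite -sum1_card.
transitivity (\sum_(y : cedge | (inc v (sval y).1 && (((sval y).2 && splits S v) == bx))
    && (cweight (sval y).1 == 2)) 1).
  by apply: eq_bigl => y; rewrite inE cinc.
rewrite (@sum_sig _ cedge_ok (fun z => (inc v z.1 && ((z.2 && splits S v) == bx))
  && (cweight z.1 == 2)) (fun _ => 1)) sum_pair /deg_in big_mkcond /=.
case sv: (splits S v).
  rewrite big1 // => e _; rewrite sum_bool /cedge_ok /cweight /=.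
  have := @splits_notin v e; rewrite sv.
  by case: (e \in S); case: (inc v e); rewrite /= ?andbF // => /(_ isT isT).
rewrite [RHS]big_mkcond; apply: eq_bigr => e _.
rewrite sum_bool /cedge_ok /cweight /= /bx (cvert_unsplit (negbT sv)).
by case: (e \in S); case: (inc v e).
Qed.

Lemma card_clegs (x : cvert) :
  #|[pred l : leg T | (clegv l == x) && (2 == 2)]| =
  if splits S (sval x).1 then 0 else nlegs (sval x).1.
Proof.
case sx: (splits S (sval x).1).
  apply: eq_card0 => l; rewrite !inE /clegv cvert_ofE.
  by rewrite (negbTE (splits_nolegs l sx)).
apply: eq_card => l; rewrite !inE /clegv cvert_ofE (cvert_unsplit (negbT sx)).
by case: (legv l == (sval x).1).
Qed.

Lemma cproj_nram (x : cvert) :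
  nram cproj x = if splits S (sval x).1 then 0 else nbranch S (sval x).1.
Proof. by rewrite /nram /= card_cinc_w2 card_clegs /nbranch; case: (splits S _). Qed.

Lemma cproj_RH (x : cvert) :
  (2%:Z - 2%:Z * (cgen x)%:Z = 2%:Z * (cdeg x)%:Z - (nram cproj x)%:Z)%R.
Proof.
rewrite cproj_nram /cgen /cdeg; case sx: (splits S (sval x).1).
  by move/eqP: sx => ->.
by have := nbranch_halfK (negbT sx); rewrite -mul2n; lia.
Qed.

Lemma cproj_morphism : is_morphism cproj.
Proof.
split => //.
- by move=> y; exact: cweight_gt0.
- by move=> y; left.
- move=> y /=; rewrite /clen mulrC divfK //.
  by rewrite pnatr_eq0 -lt0n cweight_gt0.
Qed.

Lemma cproj_surj : surjective_map cproj.
Proof.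
split.
- by move=> v; exists (cvert_of v false).
- by move=> e; exists (exist cedge_ok (e, false) isT).
- by move=> l; exists l.
Qed.

Lemma cproj_harmonic : harmonic_with cproj cdeg.
Proof. by move=> x; split; [exact: cproj_ldegE | exact: cproj_ldegL]. Qed.

Lemma clift_adj (x : cvert) w : adj (sval x).1 w ->
  exists y : cvert, @adj R cgraph x y /\ (sval y).1 = w.
Proof.
move=> /existsP[e je]; set v := (sval x).1; set bx := (sval x).2.
have ve : inc v e by exact: joins_inc je.
set b := bx && (e \notin S).
have ok : cedge_ok (e, b) by rewrite /cedge_ok /b; case: (bx); case: (e \in S).
have xE : cvert_of v b = x.
  apply/eqP; rewrite cvert_ofE eqxx /= -/v -/bx /b.
  have := svalP x; rewrite /cvert_ok -/v -/bx.
  by case: (boolP bx) => hbx /= => [sv | _] //; rewrite sv (splits_notin sv ve).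
exists (cvert_of w b); split => //.
apply/existsP; exists (exist cedge_ok (e, b) ok); rewrite /= /csrc /ctgt /=.
by case/orP: je => /andP[/eqP-> /eqP->]; rewrite -/v xE !eqxx ?orbT.
Qed.

Lemma clift_path (s : seq (vert T)) v : path (@adj R T) v s ->
  forall x : cvert, (sval x).1 = v ->
  exists y : cvert, (sval y).1 = last v s /\ connect (@adj R cgraph) x y.
Proof.
elim: s v => [|w s IH] v /=; first by move=> _ x xv; exists x; split.
case/andP => vw ps x xv.
have xw : adj (sval x).1 w by rewrite xv.
have [y [xy yw]] := clift_adj xw.
have [z [zl yz]] := IH w ps y yw.
by exists z; split => //; apply: connect_trans (connect1 xy) yz.
Qed.

Lemma cgraph_connected : 0 < #|leg T| -> connected_graph cgraph.
Proof.
case/card_gt0P=> l0 _; set r := legv l0.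
have nr : ~~ splits S r by apply/negP => /(splits_nolegs l0); rewrite eqxx.
have to_root (x : cvert) : connect (@adj R cgraph) x (cvert_of r false).
  have /connectP[s ps sl] := tree.1 (sval x).1 r.
  have [y [yl xy]] := clift_path ps erefl.
  suff -> : cvert_of r false = y by [].
  by apply/eqP; rewrite cvert_ofE yl -sl eqxx /= (cvert_unsplit (_ : ~~ splits S _)) ?yl -?sl.
move=> u v; apply: connect_trans (to_root u) _.
by rewrite (sym_connect_sym (@adj_sym _ cgraph)); exact: to_root.
Qed.

Lemma card_cvert : #|vert cgraph| = #|vert T| + \sum_v (splits S v : nat).
Proof.
rewrite card_sig -sum1_card.
transitivity (\sum_(z | cvert_ok z) 1); first by apply: eq_bigl => z; rewrite inE.
rewrite sum_pair -sum1_card -big_split /=; apply: eq_bigr => v _.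
by rewrite sum_bool /cvert_ok /=; case: (splits S v).
Qed.

Lemma card_cedge : #|edge cgraph| + #|S| = 2 * #|edge T|.
Proof.
rewrite card_sig -!sum1_card.
transitivity (\sum_(z | cedge_ok z) 1 + \sum_(e in S) 1).
  by congr (_ + _); apply: eq_bigl => z; rewrite inE.
rewrite sum_pair big_distrr (big_mkcond (fun e => e \in S)) -big_split /=.
by apply: eq_bigr => e _; rewrite sum_bool /cedge_ok /=; case: (e \in S).
Qed.

Lemma sum_cgen :
  2 * \sum_(x : vert cgraph) gen x + 2 * #|vert T| =
  \sum_v nbranch S v + 2 * \sum_v (splits S v : nat).
Proof.
rewrite (_ : \sum_(x : vert cgraph) gen x = \sum_(x : cvert) cgen x) //.
rewrite (@sum_sig _ cvert_ok xpredT (fun z => (nbranch S z.1 - 2)./2)) sum_pair.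
rewrite -sum1_card !big_distrr -!big_split /=; apply: eq_bigr => v _.
rewrite sum_bool /cvert_ok /=; case sv: (splits S v) => /=.
  by move/eqP: sv => ->.
by have := nbranch_halfK (negbT sv); rewrite -mul2n; lia.
Qed.

Lemma cgraph_genus : #|leg T| = 6 -> genus cgraph = Posz 2.
Proof.
move=> legs6; rewrite /genus.
have := sum_nbranch tree S; have := tree.2; have := card_cedge; have := sum_cgen.
have := card_cvert; rewrite legs6; lia.
Qed.

Lemma cproj_g2_cover : #|leg T| = 6 -> g2_cover cproj.
Proof.
move=> legs6; split.
- by apply: cgraph_connected; rewrite legs6.
- exact: cgraph_genus.
- by rewrite /= legs6.
- split; first exact: cproj_morphism.
  split; first exact: cproj_surj.
  by exists cdeg; split; [exact: cproj_harmonic | exact: cproj_fiber | exact: cproj_RH].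
- by move=> l; exists l.
Qed.

End CanonicalCover.

Theorem proposition4p7 (R : realType) (T : mgraph R) :
  is_tree T -> #|leg T| = 6%N -> (forall v : vert T, gen v = 0%N) ->
  (exists (G : mgraph R) (p : gmap G T), g2_cover p) /\
  (forall (G1 G2 : mgraph R) (p1 : gmap G1 T) (p2 : gmap G2 T),
      g2_cover p1 -> g2_cover p2 -> cover_iso p1 p2).
Proof.
move=> tree legs6 _.
have [S parity_S] : exists S : {set edge T}, forall v, parity S v = odd (nlegs v).
  by apply: (leg_parity_set tree); rewrite legs6.
split; first by exists (cgraph S), (cproj S); exact: cproj_g2_cover.
move=> G1 G2 p1 p2 cov1 cov2.
have [sV1 [sE1 lab1]] := g2_cover_labelling tree parity_S cov1.
have [sV2 [sE2 lab2]] := g2_cover_labelling tree parity_S cov2.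
have morph1 : is_morphism p1 by case: cov1 => _ _ _ [].
have morph2 : is_morphism p2 by case: cov2 => _ _ _ [].
exact: (cover_iso_of_labellings morph1 morph2 lab1 lab2).
Qed.
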